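(* Let $(X,\nu,\eta)$ be a solution of the fluid equations with some arrival rate $\lambda\ge0$ and initial condition in $\bar{\mathcal S}_0$, and let $Q$ be its queue process. Then $\limsup_{t\to\infty}\int_0^tQ(s)g^s(t-s)\,ds\le\limsup_{t\to\infty}Q(t)$.
   Context: Standing assumption (A1): $G^s,G^r$ are cumulative distribution functions on $[0,\infty)$ with $G^s(0+)=G^r(0+)=0$, absolutely continuous with densities $g^s,g^r$. Write $\bar G^s=1-G^s$, $\bar G^r=1-G^r$, $H^s=\sup\{x\ge0:G^s(x)<1\}$, $H^r=\sup\{x\ge0:G^r(x)<1\}$, and hazard rates $h^s=g^s/\bar G^s$ on $[0,H^s)$, $h^r=g^r/\bar G^r$ on $[0,H^r)$. It is assumed that $\int_0^\infty\bar G^r(x)\,dx<\infty$, $\int_0^\infty\bar G^s(x)\,dx=\int_0^\infty xg^s(x)\,dx=1$, and that there exist $\bar H^s<H^s$ and $\bar H^r<H^r$ such that $h^s$ (resp. $h^r$) is a.e. equal to a function that is bounded or lower semicontinuous on $(\bar H^s,H^s)$ (resp. $(\bar H^r,H^r)$). Notation: $\mathcal M_F[0,H)$ is the set of finite nonnegative Borel measures on $[0,H)$; $\langle\psi,\mu\rangle=\int\psi\,d\mu$; $\mathbf 1$ is the constant function $1$; for $\mu\in\mathcal M_F[0,H)$, $F^\mu(x)=\mu[0,x]$ and $(F^\mu)^{-1}(y)=\inf\{x>0:F^\mu(x)\ge y\}$. State space: $\bar{\mathcal S}_0=\{(x,\nu,\eta)\in\mathbb R_+\times\mathcal M_F[0,H^s)\times\mathcal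 M_F[0,H^r):1-\langle\mathbf 1,\nu\rangle=[1-x]^+\}$. Fluid equations: Given $\lambda\ge0$ and $(X(0),\nu_0,\eta_0)\in\bar{\mathcal S}_0$, a càdlàg function $t\mapsto(X(t),\nu_t,\eta_t)$ is a solution of the fluid equations with arrival rate $\lambda$ and this initial condition if for all $t\ge0$: $S(t):=\int_0^t\langle h^r,\eta_s\rangle ds<\infty$ and $D(t):=\int_0^t\langle h^s,\nu_s\rangle ds<\infty$; for every $\varphi\in C^1_c([0,H^s)\times\mathbb R_+)$, $\langle\varphi(\cdot,t),\nu_t\rangle=\langle\varphi(\cdot,0),\nu_0\rangle+\int_0^t\langle\varphi_s(\cdot,s)+\varphi_x(\cdot,s),\nu_s\rangle ds-\int_0^t\langle h^s\varphi(\cdot,s),\nu_s\rangle ds+\int_0^t\varphi(0,s)\,dK(s)$, where $K(t)=\langle\mathbf 1,\nu_t\rangle-\langle\mathbf 1,\nu_0\rangle+D(t)$; for every $\varphi\in C^1_c([0,H^r)\times\mathbb R_+)$, $\langle\varphi(\cdot,t),\eta_t\rangle=\langle\varphi(\cdot,0),\eta_0\rangle+\int_0^t\langle\varphi_s(\cdot,s)+\varphi_x(\cdot,s),\eta_s\rangle ds-\int_0^t\langle h^r\varphi(\cdot,s),\eta_s\rangle ds+\lambda\int_0^t\varphi(0,s)\,ds$; $1-\langle\mathbf 1,\nu_t\rangle=[1-X(t)]^+$; $X(t)=X(0)+\lambda t-D(t)-R(t)$ with $R(t)=\int_0^t\int_0^{Q(s)}h^r((F^{\eta_s})^{-1}(y))\,dy\,ds$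 and $Q(t)=X(t)-\langle\mathbf 1,\nu_t\rangle$; and $Q(t)\le\langle\mathbf 1,\eta_t\rangle$. *)

From HB Require Import structures.
From mathcomp Require Import all_boot all_order all_algebra.
From mathcomp Require Import all_classical all_reals all_analysis.
Set Implicit Arguments. Unset Strict Implicit. Unset Printing Implicit Defensive.
Import Order.TTheory GRing.Theory Num.Theory.
Import numFieldNormedType.Exports.
Local Open Scope classical_set_scope.
Local Open Scope ring_scope.

Section FluidDefs.
Variable R : realType.

Notation leb := (@lebesgue_measure R).
Notation meas := {measure set (measurableTypeR R) -> \bar R}%E.

Definition cdf (g : R -> R) (x : R) : R :=
  fine (\int[leb]_(y in `[0%R, x]) (g y)%:E)%E.

Definition ccdf (g : R -> R) (x : R) : R := 1 - cdf g x.

Definition Hsup (g : R -> R) : \bar R :=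
  ereal_sup [set x%:E | x in [set x : R | 0 <= x /\ cdf g x < 1]].

Definition hazard (g : R -> R) (x : R) : R := g x / ccdf g x.

Definition dom0H (H : \bar R) : set R := [set x : R | 0 <= x /\ (x%:E < H)%E].

Definition lsc_on (A : set R) (f : R -> R) : Prop :=
  forall x, A x -> forall e : R, 0 < e ->
    exists2 d : R, 0 < d & forall y, A y -> `|y - x| < d -> f x - e < f y.

Definition hazard_regular (g : R -> R) : Prop :=
  exists Hb : R, (Hb%:E < Hsup g)%E /\
    exists f : R -> R,
      leb.-negligible [set x | (Hb%:E < x%:E < Hsup g)%E /\ hazard g x <> f x] /\
      ((exists M : R, forall x, (Hb%:E < x%:E < Hsup g)%E -> `|f x| <= M) \/
       lsc_on [set x | (Hb%:E < x%:E < Hsup g)%E] f).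

Definition is_density (g : R -> R) : Prop :=
  measurable_fun [set: R] g /\ (forall x, 0 <= x -> 0 <= g x) /\
  (\int[leb]_(x in `[0%R, +oo[) (g x)%:E = 1)%E.

Definition assumptionA1 (gs gr : R -> R) : Prop :=
  is_density gs /\ is_density gr /\
  (\int[leb]_(x in `[0%R, +oo[) (ccdf gr x)%:E < +oo)%E /\
  (\int[leb]_(x in `[0%R, +oo[) (ccdf gs x)%:E = 1)%E /\
  (\int[leb]_(x in `[0%R, +oo[) (x * gs x)%:E = 1)%E /\
  hazard_regular gs /\ hazard_regular gr.

(* element of M_F[0,H): finite measure on R carried by [0,H) *)
Definition MF (H : \bar R) (mu : meas) : Prop :=
  (mu setT < +oo)%E /\ mu (~` dom0H H) = 0%E.

Definition mpair (H : \bar R) (mu : meas) (f : R -> R) : R :=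
  fine (\int[mu]_(x in dom0H H) (f x)%:E)%E.

Definition epair (H : \bar R) (mu : meas) (f : R -> R) : \bar R :=
  (\int[mu]_(x in dom0H H) (f x)%:E)%E.

Definition mmass (H : \bar R) (mu : meas) : R := mpair H mu (fun _ => 1).

Definition Fmu (mu : meas) (x : R) : R := fine (mu `[0%R, x]%classic).
Definition Fmu_inv (mu : meas) (y : R) : R := inf [set x : R | 0 < x /\ y <= Fmu mu x].

Definition eint0 (t : R) (F : R -> \bar R) : \bar R := (\int[leb]_(s in `[0%R, t]) F s)%E.
Definition rint0 (t : R) (F : R -> R) : R := fine (eint0 t (fun s => (F s)%:E)).

Definition cadlag (f : R -> R) : Prop :=
  (forall t, 0 <= t -> f x @[x --> at_right t] --> f t) /\
  (forall t, 0 < t -> cvg (f x @[x --> at_left t])).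

Definition Cb (H : \bar R) (phi : R -> R) : Prop :=
  {within dom0H H, continuous phi} /\ exists M : R, forall x, dom0H H x -> `|phi x| <= M.

(* cadlag in M_F[0,H) with the weak topology *)
Definition cadlag_meas (H : \bar R) (nu : R -> meas) : Prop :=
  (forall t, 0 <= t -> forall phi, Cb H phi ->
      mpair H (nu s) phi @[s --> at_right t] --> mpair H (nu t) phi) /\
  (forall t, 0 < t -> exists mu : meas, MF H mu /\ forall phi, Cb H phi ->
      mpair H (nu s) phi @[s --> at_left t] --> mpair H mu phi).

(* phi in C^1_c([0,H) x R_+), given with its partial derivatives phix, phis *)
Definition C1c (H : \bar R) (phi phix phis : R -> R -> R) : Prop :=
  (forall x s : R, is_derive x (1:R) (fun y : R => phi y s) (phix x s)) /\
  (forall x s : R, is_derive s (1:R) (phi x) (phis x s)) /\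
  continuous (fun p : R * R => phix p.1 p.2) /\
  continuous (fun p : R * R => phis p.1 p.2) /\
  exists c T : R, (c%:E < H)%E /\
    forall x s, 0 <= x -> 0 <= s -> c < x \/ T < s -> phi x s = 0.

(* Riemann-Stieltjes integral int_0^t f(s) dK(s) of a C^1 integrand f (with
   derivative f') against K, defined by integration by parts *)
Definition stieltjes (t : R) (f f' K : R -> R) : R :=
  f t * K t - f 0 * K 0 - rint0 t (fun s => K s * f' s).

Definition Dext (gs : R -> R) (nu : R -> meas) (t : R) : \bar R :=
  eint0 t (fun s => epair (Hsup gs) (nu s) (hazard gs)).
Definition Sext (gr : R -> R) (eta : R -> meas) (t : R) : \bar R :=
  eint0 t (fun s => epair (Hsup gr) (eta s) (hazard gr)).
Definition Dproc gs nu t : R := fine (Dext gs nu t).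

Definition Qproc (gs : R -> R) (X : R -> R) (nu : R -> meas) (t : R) : R :=
  X t - mmass (Hsup gs) (nu t).

Definition Kproc (gs : R -> R) (nu : R -> meas) (t : R) : R :=
  mmass (Hsup gs) (nu t) - mmass (Hsup gs) (nu 0) + Dproc gs nu t.

Definition Rext (gs gr : R -> R) (X : R -> R) (nu eta : R -> meas) (t : R) : \bar R :=
  eint0 t (fun s => (\int[leb]_(y in `[0%R, Qproc gs X nu s]) (hazard gr (Fmu_inv (eta s) y))%:E)%E).

Definition initS0 (gs gr : R -> R) (x : R) (nu0 eta0 : meas) : Prop :=
  0 <= x /\ MF (Hsup gs) nu0 /\ MF (Hsup gr) eta0 /\
  1 - mmass (Hsup gs) nu0 = Num.max (1 - x) 0.

Definition fluid_solution (gs gr : R -> R) (lam : R)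
    (X : R -> R) (nu eta : R -> meas) : Prop :=
  initS0 gs gr (X 0) (nu 0) (eta 0) /\
  (forall t, 0 <= t -> MF (Hsup gs) (nu t) /\ MF (Hsup gr) (eta t)) /\
  cadlag X /\ cadlag_meas (Hsup gs) nu /\ cadlag_meas (Hsup gr) eta /\
  (forall t, 0 <= t ->
     (Sext gr eta t < +oo)%E /\ (Dext gs nu t < +oo)%E /\
     (Rext gs gr X nu eta t < +oo)%E) /\
  (forall t, 0 <= t -> forall phi phix phis, C1c (Hsup gs) phi phix phis ->
     mpair (Hsup gs) (nu t) (fun x => phi x t) =
       mpair (Hsup gs) (nu 0) (fun x => phi x 0)
     + rint0 t (fun s => mpair (Hsup gs) (nu s) (fun x => phis x s + phix x s))
     - rint0 t (fun s => mpair (Hsup gs) (nu s) (fun x => hazard gs x * phi x s))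
     + stieltjes t (phi 0) (phis 0) (Kproc gs nu)) /\
  (forall t, 0 <= t -> forall phi phix phis, C1c (Hsup gr) phi phix phis ->
     mpair (Hsup gr) (eta t) (fun x => phi x t) =
       mpair (Hsup gr) (eta 0) (fun x => phi x 0)
     + rint0 t (fun s => mpair (Hsup gr) (eta s) (fun x => phis x s + phix x s))
     - rint0 t (fun s => mpair (Hsup gr) (eta s) (fun x => hazard gr x * phi x s))
     + lam * rint0 t (phi 0)) /\
  (forall t, 0 <= t -> 1 - mmass (Hsup gs) (nu t) = Num.max (1 - X t) 0) /\
  (forall t, 0 <= t ->
     X t = X 0 + lam * t - Dproc gs nu t - fine (Rext gs gr X nu eta t)) /\
  (forall t, 0 <= t -> Qproc gs X nu t <= mmass (Hsup gr) (eta t)).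

Definition limsup_pinfty (f : R -> R) : \bar R :=
  ereal_inf [set ereal_sup [set (f t)%:E | t in [set t | T <= t]] | T in [set: R]].

Definition convQ (Q g : R -> R) (t : R) : R :=
  rint0 t (fun s => Q s * g (t - s)).

End FluidDefs.

From Pilot Require Import Defs.
From HB Require Import structures.
From mathcomp Require Import all_boot all_order all_algebra.
From mathcomp Require Import all_classical all_reals all_analysis.
From mathcomp Require Import lra measurable_realfun.
Set Implicit Arguments. Unset Strict Implicit. Unset Printing Implicit Defensive.
Import Order.TTheory GRing.Theory Num.Theory.
Import numFieldNormedType.Exports.
Local Open Scope classical_set_scope.
Local Open Scope ring_scope.

(* The proof is a dominated estimate of (Q * g)(t) = int_0^t Q(s) g(t - s) ds:
   - the queue is nonnegative and grows at most linearly, Q(t) <= |X(0)| + lam t,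
     because the servers hold min(X, 1) and X grows at most at rate lam;
   - if Q <= m after time T0, split [0, t] at T >= T0: on [T, t] the integrand
     is at most m g(t - s), on [0, T] at most B g(t - s) where B bounds Q on
     [0, T]; reflecting s |-> t - s, this gives (Q * g)(t) <= m + B G[t - T, t];
   - the tightness of the density g makes G[t - T, t] arbitrarily small for t
     large, so (Q * g)(t) <= m + e eventually. *)

Section Reflection.
Variable R : realType.
Notation leb := (@lebesgue_measure R).
Local Open Scope ereal_scope.

Definition reflection (t : R) : measurableTypeR R -> measurableTypeR R :=
  fun s => (t - s)%R.

Lemma measurable_reflection (t : R) : measurable_fun [set: measurableTypeR R] (reflection t).
Proof. exact: measurable_funB. Qed.

Lemma reflection_itv (t a b : R) :
  reflection t @^-1` `[(t - b)%R, (t - a)%R] = `[a, b]%classic.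
Proof.
by apply/seteqP; split => x /=; rewrite /reflection !in_itv /= => /andP[h1 h2];
  apply/andP; split; lra.
Qed.

(* Lebesgue measure is invariant under reflection: both measures agree on
   half-open intervals. *)
Lemma pushforward_reflection (t : R) (A : set R) :
  measurable A -> pushforward leb (reflection t) A = leb A.
Proof.
move=> mA; apply/esym/lebesgue_measure_unique => //=; first exact: measurable_reflection.
move=> _ _ [[a b]] _ <-; rewrite /pushforward.
have -> : reflection t @^-1` `]a, b] = `[(t - b)%R, (t - a)%R[%classic.
  by apply/seteqP; split => x /=; rewrite /reflection !in_itv /= => /andP[h1 h2];
    apply/andP; split; lra.
rewrite !lebesgue_measure_itv /= !lte_fin.
have -> : (t - b < t - a)%R = (a < b)%R by apply/idP/idP; lra.
by case: ifP => // _; congr (_%:E); lra.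
Qed.

Lemma integral_reflection (g : R -> R) (t a b : R) :
  measurable_fun [set: R] g ->
  (forall x, (t - b <= x <= t - a)%R -> (0 <= g x)%R) ->
  \int[leb]_(s in `[a, b]) (g (t - s))%:E =
  \int[leb]_(u in `[(t - b)%R, (t - a)%R]) (g u)%:E.
Proof.
move=> mg g0; rewrite -(reflection_itv t).
rewrite -[LHS]/(\int[leb]_(s in _) ((fun u => (g u)%:E) \o reflection t) s).
rewrite -(ge0_integral_pushforward (measurable_reflection t)) //.
- apply: (eq_measure_integral leb); last first.
    by move=> mr A mA _; exact: pushforward_reflection.
  exact: measurable_reflection.
- by apply/measurable_EFinP; exact: measurable_funS mg.
- by move=> x; rewrite inE /= in_itv /= => /g0; rewrite lee_fin.
Qed.

(* Monotonicity of the integral of nonnegative functions, without measurability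
   assumptions (the queue process is not assumed measurable). *)
Lemma ge0_le_integral_nomeas (D : set (measurableTypeR R))
    (f h : measurableTypeR R -> \bar R) :
  (forall x, D x -> 0 <= f x) -> (forall x, D x -> f x <= h x) ->
  \int[leb]_(x in D) f x <= \int[leb]_(x in D) h x.
Proof.
move=> f0 fh.
have h0 x : D x -> 0 <= h x by move=> Dx; exact: le_trans (f0 x Dx) (fh x Dx).
rewrite (ge0_integralE _ f0) (ge0_integralE _ h0).
apply: ereal_sup_le => _ [s hs <-]; exists s => // x.
apply: le_trans (hs x) _.
by rewrite /patch; case: ifPn => // /set_mem Dx; exact: fh.
Qed.
End Reflection.

Section Density.
Variables (R : realType) (g : R -> R).
Hypothesis dg : is_density g.
Notation leb := (@lebesgue_measure R).
Local Open Scope ereal_scope.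

Let g0 : forall x, (0 <= x)%R -> (0 <= g x)%R := dg.2.1.

Lemma measurable_density (A : set (measurableTypeR R)) : measurable_fun A (fun x => (g x)%:E).
Proof. by apply/measurable_EFinP; exact: measurable_funS dg.1. Qed.

Lemma density_mass_le1 (A : set R) :
  measurable A -> A `<=` `[0%R, +oo[ -> \int[leb]_(x in A) (g x)%:E <= 1.
Proof.
move=> mA A0; rewrite -dg.2.2; apply: ge0_subset_integral => //.
- exact: measurable_density.
- by move=> y; rewrite /= in_itv /= andbT => y0; rewrite lee_fin g0.
Qed.

Lemma density_itv_le1 (a b : R) : (0 <= a)%R -> \int[leb]_(x in `[a, b]) (g x)%:E <= 1.
Proof.
move=> a0; apply: density_mass_le1 => // y; rewrite /= !in_itv /= andbT.
by move=> /andP[ay _]; exact: le_trans ay.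
Qed.

Lemma density_disjoint_le1 (c a b : R) : (0 <= c)%R -> (c < a)%R ->
  \int[leb]_(x in `[0%R, c]) (g x)%:E + \int[leb]_(x in `[a, b]) (g x)%:E <= 1.
Proof.
move=> c0 ca.
have sub : `[0%R, c] `|` `[a, b] `<=` `[0%R, +oo[.
  move=> x; rewrite /= !in_itv /= andbT => -[/andP[] //|/andP[ax _]].
  exact: le_trans (ltW (le_lt_trans c0 ca)) ax.
rewrite -ge0_integral_setU //.
- by apply: density_mass_le1 => //; apply: measurableU; exact: measurable_itv.
- exact: measurable_density.
- by move=> x /sub; rewrite /= in_itv /= andbT => x0; rewrite lee_fin g0.
- rewrite disj_set2E; apply/eqP/seteqP; split => x //=.
  rewrite !in_itv /= => -[/andP[_ xc] /andP[ax _]].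
  by move: (lt_le_trans ca ax) xc => h1 h2; lra.
Qed.

Lemma cdf_le1 (x : R) : (Defs.cdf g x <= 1)%R.
Proof.
have I0 : 0 <= \int[leb]_(y in `[0%R, x]) (g y)%:E.
  by apply: integral_ge0 => y; rewrite /= in_itv /= => /andP[y0 _]; rewrite lee_fin g0.
have I1 := @density_itv_le1 0 x (lexx _).
by rewrite /Defs.cdf -lee_fin fineK // ge0_fin_numE // (le_lt_trans I1) // ltey.
Qed.

Lemma hazard_ge0 (x : R) : (0 <= x)%R -> (0 <= hazard g x)%R.
Proof. by move=> x0; rewrite /hazard divr_ge0 ?g0 // /Defs.ccdf subr_ge0 cdf_le1. Qed.

Lemma density_mass_approx (d : R) : (0 < d)%R ->
  exists n : nat, (1 - d)%:E < \int[leb]_(x in `[0%R, n%:R]) (g x)%:E.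
Proof.
move=> d0.
pose F (n : nat) : set (measurableTypeR R) := `[0%R, n%:R]%classic.
have mF n : measurable (F n) by exact: measurable_itv.
have ndF : {homo F : n m / (n <= m)%N >-> (n <= m)%O}.
  move=> m n mn; rewrite subsetEset /F => x /=; rewrite !in_itv /= => /andP[-> h].
  by rewrite (le_trans h) // ler_nat.
have f0 n x : F n x -> 0 <= (g x)%:E.
  by rewrite /F /= in_itv /= => /andP[x0 _]; rewrite lee_fin g0.
have UF : \bigcup_n F n = `[0%R, +oo[%classic.
  apply/seteqP; split => x /=.
    by move=> [n _]; rewrite /F /= !in_itv /= => /andP[-> _].
  rewrite in_itv /= andbT => x0; exists (Num.Def.truncn x).+1 => //.
  by rewrite /F /= in_itv /= x0 ltW // truncnS_gt.
have cvF := @ge0_nondecreasing_set_cvg_integral _ _ _ F _ leb ndF mF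
  (fun n => measurable_density (A := F n)) f0.
rewrite UF dg.2.2 in cvF.
have ndI := @ge0_nondecreasing_set_nondecreasing_integral _ _ _ F _ leb ndF mF
  (fun n => measurable_density (A := F n)) f0.
have supI : ereal_sup (range (fun n => \int[leb]_(x in F n) (g x)%:E)) = 1.
  rewrite -(cvg_lim _ cvF) //; apply/esym/cvg_lim => //.
  exact: ereal_nondecreasing_cvgn ndI.
have : (1 - d)%:E < ereal_sup (range (fun n => \int[leb]_(x in F n) (g x)%:E)).
  by rewrite supI lte_fin; lra.
by case/ereal_sup_gt => _ [n _ <-] hn; exists n.
Qed.

Lemma density_tail (d : R) : (0 < d)%R ->
  exists N : R, (0 <= N)%R /\
    forall a b : R, (N <= a)%R -> \int[leb]_(x in `[a, b]) (g x)%:E <= d%:E.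
Proof.
move=> d0; have [n hn] := density_mass_approx d0.
exists (n%:R + 1)%R; split=> [|a b Na]; first exact: addr_ge0.
have na : (n%:R < a)%R by apply: lt_le_trans Na; rewrite ltrDl.
have := @density_disjoint_le1 n%:R a b (ler0n _ n) na.
move: hn; set U := \int[leb]_(x in _) _; set J := \int[leb]_(x in _) _ => hn UJ.
have U0 : 0 <= U.
  by apply: integral_ge0 => x; rewrite /= in_itv /= => /andP[x0 _]; rewrite lee_fin g0.
have J0 : 0 <= J.
  apply: integral_ge0 => x; rewrite /= in_itv /= => /andP[ax _]; rewrite lee_fin g0 //.
  exact: le_trans (ltW (le_lt_trans (ler0n _ n) na)) ax.
have [Ufin Jfin] : U \is a fin_num /\ J \is a fin_num.
  by rewrite !ge0_fin_numE // !(le_lt_trans _ (ltey 1)) // (le_trans _ UJ) // ?leeDl ?leeDr.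
move: hn UJ; rewrite -(fineK Ufin) -(fineK Jfin) -EFinD !lee_fin lte_fin.
by move=> h1 h2; lra.
Qed.

Lemma integral_reflected_majorant (t T M B : R) :
  (0 <= T <= t)%R -> (0 <= M)%R -> (0 <= B)%R ->
  \int[leb]_(s in `[0%R, t]) (M%:E * (g (t - s))%:E +
     ((fun s => B%:E * (g (t - s))%:E) \_ `[0%R, T]) s) =
  M%:E * \int[leb]_(x in `[0%R, t]) (g x)%:E +
  B%:E * \int[leb]_(x in `[(t - T)%R, t]) (g x)%:E.
Proof.
move=> /andP[T0 Tt] M0 B0.
have mk (A : set (measurableTypeR R)) :
    measurable A -> measurable_fun A (fun s => (g (t - s))%:E).
  move=> mA; apply/measurable_EFinP.
  exact: measurable_funS (measurableT_comp dg.1 (measurable_reflection t)).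
have k0 s : (s <= t)%R -> 0 <= (g (t - s))%:E by move=> st; rewrite lee_fin g0 // subr_ge0.
have m0t : measurable (`[0%R, t]%classic : set (measurableTypeR R)).
  exact: measurable_itv.
rewrite ge0_integralD //; last 4 first.
- by move=> s; rewrite /= in_itv /= => /andP[_ st]; rewrite mule_ge0 // k0.
- by apply: emeasurable_funM => //; exact: mk.
- move=> s _; rewrite /patch; case: ifPn => // /set_mem; rewrite /= in_itv /=.
  by move=> /andP[_ sT]; rewrite mule_ge0 // k0 // (le_trans sT).
- apply/measurable_restrict => //.
  apply: emeasurable_funM => //; apply: mk.
  by apply: measurableI => //; exact: measurable_itv.
rewrite -integral_mkcondr.
have -> : `[0%R, t] `&` `[0%R, T] = `[0%R, T]%classic :> set (measurableTypeR R).
  apply/seteqP; split => x /=; rewrite !in_itv /=; first by move=> [_ ->].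
  by move=> /andP[x0 xT]; split; apply/andP; split => //; exact: le_trans Tt.
rewrite !ge0_integralZl_EFin //; last 4 first.
- by move=> s; rewrite /= in_itv /= => /andP[_ sT]; rewrite k0 // (le_trans sT).
- by apply: mk; exact: measurable_itv.
- by move=> s; rewrite /= in_itv /= => /andP[_ st]; rewrite k0.
- exact: mk.
have gx0 u v x : (0 <= u)%R -> (u <= x <= v)%R -> (0 <= g x)%R.
  by move=> u0 /andP[ux _]; apply: g0; exact: le_trans ux.
rewrite !integral_reflection ?subrr ?subr0 //.
- exact: dg.1.
- by move=> x; apply: gx0; rewrite subr_ge0.
- exact: dg.1.
- by move=> x; apply: gx0.
Qed.

Lemma convolution_bound (Q : R -> R) (t T M B d : R) :
  (0 <= T <= t)%R -> (0 <= M)%R -> (0 <= B)%R ->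
  (forall s, (0 <= s <= t)%R -> (0 <= Q s)%R) ->
  (forall s, (0 <= s <= T)%R -> (Q s <= B)%R) ->
  (forall s, (T <= s <= t)%R -> (Q s <= M)%R) ->
  \int[leb]_(x in `[(t - T)%R, t]) (g x)%:E <= d%:E ->
  (convQ Q g t <= M + B * d)%R.
Proof.
move=> /andP[T0 Tt] M0 B0 Q0 QB QM mass_d.
have dominated : eint0 t (fun s => (Q s * g (t - s))%:E) <=
    \int[leb]_(s in `[0%R, t]) (M%:E * (g (t - s))%:E +
       ((fun s => B%:E * (g (t - s))%:E) \_ `[0%R, T]) s).
  apply: ge0_le_integral_nomeas => s; rewrite /= in_itv /= => /andP[s0 st].
    by rewrite lee_fin mulr_ge0 ?Q0 ?s0 // g0 // subr_ge0.
  have gts0 : (0 <= g (t - s))%R by rewrite g0 // subr_ge0.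
  rewrite /patch; case: ifPn => [/set_mem|]; rewrite /= ?in_itv /=.
    move=> /andP[_ sT]; rewrite -!EFinM -EFinD lee_fin.
    have QsB : (Q s <= B)%R by apply: QB; rewrite s0 sT.
    by nra.
  rewrite notin_setE /= in_itv /= s0 /= => /negP; rewrite -ltNge => Ts.
  rewrite adde0 -EFinM lee_fin ler_wpM2r //.
  by apply: QM; rewrite (ltW Ts).
rewrite integral_reflected_majorant ?T0 // in dominated.
have mass_t := density_itv_le1 t (lexx 0%R).
have bounded : eint0 t (fun s => (Q s * g (t - s))%:E) <= (M + B * d)%:E.
  apply: le_trans dominated _; rewrite EFinD EFinM; apply: leeD.
    by rewrite -[leRHS]mule1; apply: lee_wpmul2l; rewrite // lee_fin.
  by apply: lee_wpmul2l; rewrite // lee_fin.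
have conv0 : 0 <= eint0 t (fun s => (Q s * g (t - s))%:E).
  apply: integral_ge0 => s; rewrite /= in_itv /= => /andP[s0 st].
  by rewrite lee_fin mulr_ge0 ?Q0 ?s0 // g0 // subr_ge0.
rewrite /convQ /rint0 -lee_fin fineK //.
by rewrite ge0_fin_numE // (le_lt_trans bounded) // ltey.
Qed.

Lemma convolution_eventually_le (Q : R -> R) (T0 m e : R) :
  (forall s, (0 <= s)%R -> (0 <= Q s)%R) ->
  (forall T, exists B, forall s, (0 <= s <= T)%R -> (Q s <= B)%R) ->
  (forall s, (T0 <= s)%R -> (Q s <= m)%R) -> (0 < e)%R ->
  exists T1, forall t, (T1 <= t)%R -> (convQ Q g t <= m + e)%R.
Proof.
move=> Q0 Qloc QM e0.
pose T := Num.max T0 0%R.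
have T0T : (T0 <= T)%R by rewrite le_max lexx.
have T_ge0 : (0 <= T)%R by rewrite le_max lexx orbT.
have m0 : (0 <= m)%R by apply: le_trans (Q0 T T_ge0) (QM T T0T).
have [B QB] := Qloc T.
have B0 : (0 <= B)%R by apply: le_trans (Q0 0%R (lexx _)) (QB 0%R _); rewrite lexx.
pose d := (e / (B + 1))%R.
have d0 : (0 < d)%R by rewrite divr_gt0 // ltr_wpDl.
have [N [N0 tail]] := density_tail d0.
exists (T + N)%R => t tTN.
have Tt : (T <= t)%R by apply: le_trans tTN; rewrite lerDl.
apply: le_trans (@convolution_bound Q t T m B d _ m0 B0 _ QB _ _) _.
- by rewrite T_ge0 Tt.
- by move=> s /andP[s0 _]; exact: Q0.
- by move=> s /andP[Ts _]; apply: QM; exact: le_trans Ts.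
- by apply: tail; lra.
have Bd : (B * d <= e)%R.
  rewrite /d mulrA ler_pdivrMr ?ltr_wpDl //.
  by nra.
by lra.
Qed.
End Density.

Section LimsupAtInfinity.
Variables (R : realType) (f : R -> R).
Local Open Scope ereal_scope.

Lemma limsup_pinfty_ge0 :
  (forall t, (0 <= t)%R -> (0 <= f t)%R) -> 0 <= limsup_pinfty f.
Proof.
move=> f0; apply/ereal_infP => _ [T _ <-].
apply: (@le_trans _ _ (f (Num.max T 0%R))%:E).
  by rewrite lee_fin f0 // le_max lexx orbT.
by apply: ereal_sup_ubound; exists (Num.max T 0%R) => //=; rewrite le_max lexx.
Qed.

Lemma limsup_pinfty_lt_eventually (c : R) :
  limsup_pinfty f < c%:E -> exists T, forall t, (T <= t)%R -> (f t <= c)%R.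
Proof.
move=> /ereal_inf_lt [_ [T _ <-]] supT; exists T => t Tt.
rewrite -lee_fin; apply: le_trans (ltW supT).
by apply: ereal_sup_ubound; exists t.
Qed.

Lemma limsup_pinfty_le_eventually (c T : R) :
  (forall t, (T <= t)%R -> (f t <= c)%R) -> limsup_pinfty f <= c%:E.
Proof.
move=> fc; apply: (@le_trans _ _ (ereal_sup [set (f t)%:E | t in [set t | (T <= t)%R]])).
  by apply: ereal_inf_lbound; exists T.
by apply/ereal_supP => _ [t Tt <-]; rewrite lee_fin fc.
Qed.
End LimsupAtInfinity.

Lemma Fmu_inv_ge0 (R : realType) (mu : {measure set (measurableTypeR R) -> \bar R}%E)
    (y : R) : 0 <= Fmu_inv mu y.
Proof.
rewrite /Fmu_inv; have [[x hx]|nx] := pselect (exists x, 0 < x /\ y <= Fmu mu x).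
  by apply: lb_le_inf; [exists x | move=> z [z0 _]; exact: ltW].
suff -> : [set x : R | 0 < x /\ y <= Fmu mu x] = set0 by rewrite inf0.
by apply/seteqP; split => z // hz; apply: nx; exists z.
Qed.

Section FluidQueue.
Variables (R : realType) (gs gr : R -> R) (lam : R) (X : R -> R).
Variables (nu eta : R -> {measure set (measurableTypeR R) -> \bar R}%E).
Hypotheses (A1 : assumptionA1 gs gr) (lam0 : 0 <= lam).
Hypothesis FS : fluid_solution gs gr lam X nu eta.
Local Notation Q := (Qproc gs X nu).

Lemma departures_ge0 (t : R) : 0 <= Dproc gs nu t.
Proof.
apply: fine_ge0; apply: integral_ge0 => s _; apply: integral_ge0 => x [x0 _].
by rewrite lee_fin; apply: hazard_ge0 => //; case: A1.
Qed.

Lemma abandonments_ge0 (t : R) : 0 <= fine (Rext gs gr X nu eta t).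
Proof.
apply: fine_ge0; apply: integral_ge0 => s _; apply: integral_ge0 => y _.
by rewrite lee_fin; apply: hazard_ge0 (Fmu_inv_ge0 _ _); case: A1 => _ [].
Qed.

Lemma content_le_arrivals (t : R) : 0 <= t -> X t <= X 0 + lam * t.
Proof.
move=> t0; have [_ [_ [_ [_ [_ [_ [_ [_ [_ [Xeq _]]]]]]]]]] := FS.
by rewrite Xeq //; have := departures_ge0 t; have := abandonments_ge0 t; lra.
Qed.

(* Since the servers hold min(X, 1), the queue is Q = max(X - 1, 0): it is
   nonnegative and grows at most linearly. *)
Lemma queue_bounds (t : R) : 0 <= t -> 0 <= Q t <= `|X 0| + lam * t.
Proof.
move=> t0; have [_ [_ [_ [_ [_ [_ [_ [_ [servers _]]]]]]]]] := FS.
have := content_le_arrivals t0; have := mulr_ge0 lam0 t0.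
have := ler_norm (X 0); have := normr_ge0 (X 0).
move: (servers t t0); rewrite /Qproc maxEle; case: ifP => [/= full|/negbT idle] *.
  have full1 : 1 <= X t by move: full; lra.
  by apply/andP; split; lra.
by rewrite -ltNge in idle; apply/andP; split; lra.
Qed.
End FluidQueue.

Theorem mainTheorem3 (R : realType) (gs gr : R -> R) (lam : R)
    (X : R -> R) (nu eta : R -> {measure set (measurableTypeR R) -> \bar R}%E) :
  assumptionA1 gs gr ->
  0 <= lam ->
  fluid_solution gs gr lam X nu eta ->
  (limsup_pinfty (convQ (Qproc gs X nu) gs) <= limsup_pinfty (Qproc gs X nu))%E.
Proof.
move=> A1 lam0 FS; have dgs : is_density gs by case: A1.
have Qbounds := queue_bounds A1 lam0 FS.
set Q := Qproc gs X nu in Qbounds *.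
have Q0 s : 0 <= s -> 0 <= Q s by move=> s0; case/andP: (Qbounds s s0).
have Qloc T : exists B, forall s, 0 <= s <= T -> Q s <= B.
  exists (`|X 0| + lam * T) => s /andP[s0 sT].
  by case/andP: (Qbounds s s0) => _ /le_trans; apply; rewrite lerD2l ler_wpM2l.
case EL: (limsup_pinfty Q) (limsup_pinfty_ge0 Q0) => [l| |] // _; last by rewrite leey.
apply/lee_addgt0Pr => e e0; have e20 : 0 < e / 2 by rewrite divr_gt0.
have [T0 QT0] : exists T0, forall s, T0 <= s -> Q s <= l + e / 2.
  by apply: limsup_pinfty_lt_eventually; rewrite EL lte_fin ltrDl.
have [T1 convT1] := convolution_eventually_le dgs Q0 Qloc QT0 e20.
rewrite -EFinD; apply: (limsup_pinfty_le_eventually (T := T1)) => t /convT1.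
by rewrite -addrA -splitr.
Qed.
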